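(* Let $M$ be a measure-once quantum finite automaton that uses both a left and a right end-marker. Then there exists a measure-once quantum finite automaton $M'$ that uses only a right end-marker and is equivalent to $M$, i.e. for every $x\in\Sigma^*$ the probability that $M$ accepts $x$ equals the probability that $M'$ accepts $x$.
   Context: A measure-once QFA with one (right) end-marker over $\Sigma$ is a tuple $(Q,\Sigma,\{U_\sigma\}_{\sigma\in\Sigma\cup\{\$\}},q_0,F)$, with $Q$ finite indexing an orthonormal basis of $\mathbb{C}^Q$, $\$\notin\Sigma$, each $U_\sigma$ unitary, $q_0\in Q$, $F\subseteq Q$; its acceptance probability on $x=x_1\cdots x_n$ is $\|P\,U_\$U_{x_n}\cdots U_{x_1}|q_0\rangle\|^2$, $P$ being the orthogonal projection onto $\mathrm{span}\{|q\rangle:q\in F\}$. A measure-once QFA with both end-markers additionally has a unitary $U_{¢}$ for a left end-marker ${¢}\notin\Sigma\cup\{\$\}$ and reads ${¢}x\$$, so its acceptance probability is $\|P\,U_\$U_{x_n}\cdots U_{x_1}U_{¢}|q_0\rangle\|^2$. *)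

(* Complex numbers are modelled as R[i] (real_closed.complex)
   for an arbitrary R : realType (so R = the reals gives the usual C). *)
From mathcomp Require Import all_boot all_order all_algebra.
From mathcomp Require Import reals.
From mathcomp.real_closed Require Import complex.
Set Implicit Arguments. Unset Strict Implicit. Unset Printing Implicit Defensive.
Import Order.TTheory GRing.Theory Num.Theory.
Local Open Scope ring_scope.

Definition adjmx (C : numClosedFieldType) (n : nat) (A : 'M[C]_n) : 'M[C]_n :=
  (map_mx (fun x => x^*) A)^T.

Definition unitary (C : numClosedFieldType) (n : nat) (A : 'M[C]_n) : Prop :=
  A *m adjmx A = 1%:M.

Definition ket (C : numClosedFieldType) (n : nat) (q : 'I_n) : 'cV[C]_n :=
  \col_i (i == q)%:R.

(* MO-QFA with only a right end-marker; states Q = 'I_n *)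
Record MOQFA1 (C : numClosedFieldType) (Sigma : finType) := {
  mo1_n : nat;
  mo1_U : Sigma -> 'M[C]_mo1_n;
  mo1_Uend : 'M[C]_mo1_n;
  mo1_q0 : 'I_mo1_n;
  mo1_F : {set 'I_mo1_n};
  mo1_unitary : (forall a, unitary (mo1_U a)) /\ unitary mo1_Uend }.

(* MO-QFA with both end-markers *)
Record MOQFA2 (C : numClosedFieldType) (Sigma : finType) := {
  mo2_n : nat;
  mo2_U : Sigma -> 'M[C]_mo2_n;
  mo2_Ubeg : 'M[C]_mo2_n;
  mo2_Uend : 'M[C]_mo2_n;
  mo2_q0 : 'I_mo2_n;
  mo2_F : {set 'I_mo2_n};
  mo2_unitary : [/\ forall a, unitary (mo2_U a), unitary mo2_Ubeg & unitary mo2_Uend] }.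

Definition run (C : numClosedFieldType) (Sigma : Type) (n : nat)
  (U : Sigma -> 'M[C]_n) (v : 'cV[C]_n) (x : seq Sigma) : 'cV[C]_n :=
  foldl (fun w a => U a *m w) v x.

(* ||P v||^2 with P the projection onto span{|q> : q in F} *)
Definition projnorm2 (C : numClosedFieldType) (n : nat) (F : {set 'I_n})
  (v : 'cV[C]_n) : C :=
  \sum_(q in F) `|v q 0| ^+ 2.

Definition accprob1 (C : numClosedFieldType) (Sigma : finType)
  (M : MOQFA1 C Sigma) (x : seq Sigma) : C :=
  projnorm2 (mo1_F M) (mo1_Uend M *m run (mo1_U M) (ket C (mo1_q0 M)) x).

Definition accprob2 (C : numClosedFieldType) (Sigma : finType)
  (M : MOQFA2 C Sigma) (x : seq Sigma) : C :=
  projnorm2 (mo2_F M)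
    (mo2_Uend M *m run (mo2_U M) (mo2_Ubeg M *m ket C (mo2_q0 M)) x).

From mathcomp Require Import all_boot all_order all_algebra.
From mathcomp Require Import reals.
From mathcomp.real_closed Require Import complex.
Set Implicit Arguments. Unset Strict Implicit. Unset Printing Implicit Defensive.
Import GRing.Theory Num.Theory.
Local Open Scope ring_scope.

(* Conjugating every letter by U_¢ absorbs the left end-marker: with
   V_a = U_¢^* U_a U_¢ and V_$ = U_$ U_¢, the inner factors U_¢ U_¢^* = 1
   cancel, so V_$ V_{x_n} ... V_{x_1} = U_$ U_{x_n} ... U_{x_1} U_¢. *)

Lemma adjmxM (C : numClosedFieldType) (n : nat) (A B : 'M[C]_n) :
  adjmx (A *m B) = adjmx B *m adjmx A.
Proof. by rewrite /adjmx (map_mxM Num.Def.conjC) trmx_mul. Qed.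

Lemma adjmxK (C : numClosedFieldType) (n : nat) (A : 'M[C]_n) :
  adjmx (adjmx A) = A.
Proof. by apply/matrixP=> i j; rewrite /adjmx !mxE conjCK. Qed.

Lemma unitary_mulVmx (C : numClosedFieldType) (n : nat) (A : 'M[C]_n) :
  unitary A -> adjmx A *m A = 1%:M.
Proof. exact: mulmx1C. Qed.

Lemma unitary_adjmx (C : numClosedFieldType) (n : nat) (A : 'M[C]_n) :
  unitary A -> unitary (adjmx A).
Proof. by move=> uA; rewrite /unitary adjmxK unitary_mulVmx. Qed.

Lemma unitaryM (C : numClosedFieldType) (n : nat) (A B : 'M[C]_n) :
  unitary A -> unitary B -> unitary (A *m B).
Proof.
move=> uA uB.
by rewrite /unitary adjmxM mulmxA -(mulmxA A) uB mulmx1 uA.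
Qed.

Lemma run_conjmx (C : numClosedFieldType) (Sigma : Type) (n : nat)
    (U : Sigma -> 'M[C]_n) (B B' : 'M[C]_n) (w : 'cV[C]_n) (x : seq Sigma) :
  B *m B' = 1%:M ->
  run (fun a => B' *m U a *m B) (B' *m w) x = B' *m run U w x.
Proof.
move=> BB'; elim: x w => [|a x IHx] w //=.
rewrite /run /= -/(run _ _ x) -/(run _ _ x) -IHx.
by rewrite -!mulmxA (mulmxA B) BB' mul1mx.
Qed.

Lemma mulmx_run_conjmx (C : numClosedFieldType) (Sigma : Type) (m n : nat)
    (U : Sigma -> 'M[C]_n) (B B' : 'M[C]_n) (E : 'M[C]_(m, n))
    (v : 'cV[C]_n) (x : seq Sigma) :
  B *m B' = 1%:M ->
  E *m B *m run (fun a => B' *m U a *m B) v x = E *m run U (B *m v) x.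
Proof.
move=> BB'; have {1}-> : v = B' *m (B *m v) by rewrite mulmxA mulmx1C ?mul1mx.
by rewrite run_conjmx // -mulmxA (mulmxA B) BB' mul1mx.
Qed.

Theorem theoremA1 (R : realType) (Sigma : finType) (M : MOQFA2 R[i] Sigma) :
  exists M' : MOQFA1 R[i] Sigma,
    forall x : seq Sigma, accprob1 M' x = accprob2 M x.
Proof.
case: M => n U Ubeg Uend q0 F [uU uBeg uEnd].
pose V a := adjmx Ubeg *m U a *m Ubeg.
have uV : (forall a, unitary (V a)) /\ unitary (Uend *m Ubeg).
  split=> [a|]; last exact: unitaryM.
  by apply: unitaryM => //; apply: unitaryM => //; apply: unitary_adjmx.
exists (@Build_MOQFA1 _ Sigma n V (Uend *m Ubeg) q0 F uV) => x.
by rewrite /accprob1 /accprob2 /= mulmx_run_conjmx.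
Qed.
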